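(* Let $G$ be a directed graph with vertices $s,t$ and $k\ge1$. For any $C_1,C_2\in L^*$ and any $e\in E(G)$, we have $B_e(C_1\vee C_2)+B_e(C_1\wedge C_2)\le B_e(C_1)+B_e(C_2)$, where $B_e(C)=\binom{\mu_e(C)}{2}$.
   Context: An $s$-$t$ cut of a directed graph $G$ is a set $X\subseteq E(G)$ such that removing $X$ leaves no directed $s$-$t$ path; $\Gamma_G(s,t)$ is the set of $s$-$t$ cuts of minimum cardinality. Fix a maximum-size collection $\mathcal P$ of pairwise edge-disjoint directed $s$-$t$ paths (each minimum $s$-$t$ cut contains exactly one edge of each path in $\mathcal P$). For $X,Y\in\Gamma_G(s,t)$, $S_{\min}(X\cup Y)$ (resp. $S_{\max}(X\cup Y)$) consists, for each $p\in\mathcal P$, of the edge of $(X\cup Y)\cap p$ occurring first (resp. last) along $p$. $X\le Y$ means every directed $s$-$t$ path meets an edge of $X$ at or before an edge of $Y$. $U^k_{\mathrm{lr}}$ is the set of $k$-tuples $[X_1,\dots,X_k]$ of elements of $\Gamma_G(s,t)$ with $X_i\le X_j$ for all $i<j$. $L^*$ is the lattice on $U^k_{\mathrm{lr}}$ with componentwise order, join $[X_i]_i\vee[Y_i]_i=[S_{\max}(X_i\cup Y_i)]_i$ and meet $[X_i]_i\wedge[Y_i]_i=[S_{\min}(X_i\cup Y_i)]_i$. For $C=[X_1,\dots,X_k]$, $\mu_e(C)$ is the number of indices $i$ with $e\in X_i$. *)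

From mathcomp Require Import all_boot.
Set Implicit Arguments. Unset Strict Implicit. Unset Printing Implicit Defensive.

Section Cuts.
Variables (V E : finType) (src dst : E -> V).

Fixpoint walk (x t : V) (p : seq E) : bool :=
  match p with
  | [::] => x == t
  | e :: q => (src e == x) && walk (dst e) t q
  end.

Definition st_path (s t : V) (p : seq E) : bool :=
  walk s t p && uniq (s :: map dst p).

Definition is_cut (s t : V) (X : {set E}) : Prop :=
  forall p, st_path s t p -> has (fun e => e \in X) p.

Definition min_cut (s t : V) (X : {set E}) : Prop :=
  is_cut s t X /\ forall Y : {set E}, is_cut s t Y -> #|X| <= #|Y|.

Definition disjoint_paths (s t : V) (P : seq (seq E)) : Prop :=
  all (st_path s t) P /\
  pairwise (fun p q => ~~ has (fun e => e \in q) p) P.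

Definition max_disjoint_paths (s t : V) (P : seq (seq E)) : Prop :=
  disjoint_paths s t P /\
  forall Q, disjoint_paths s t Q -> size Q <= size P.

Definition first_in (A : {set E}) (p : seq E) (e : E) : bool :=
  [&& e \in p, e \in A & ~~ has (fun f => f \in A) (take (index e p) p)].
Definition last_in (A : {set E}) (p : seq E) (e : E) : bool :=
  [&& e \in p, e \in A & ~~ has (fun f => f \in A) (drop (index e p).+1 p)].

Definition Smin (P : seq (seq E)) (A : {set E}) : {set E} :=
  [set e | has (fun p => first_in A p e) P].
Definition Smax (P : seq (seq E)) (A : {set E}) : {set E} :=
  [set e | has (fun p => last_in A p e) P].

Definition cut_le (s t : V) (X Y : {set E}) : Prop :=
  forall p, st_path s t p ->
    exists x y, [/\ x \in X, y \in Y, x \in p, y \in p & index x p <= index y p].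

Definition U_lr (s t : V) (k : nat) (C : 'I_k -> {set E}) : Prop :=
  (forall i, min_cut s t (C i)) /\
  (forall i j : 'I_k, i < j -> cut_le s t (C i) (C j)).

Definition Ljoin (P : seq (seq E)) (k : nat) (C1 C2 : 'I_k -> {set E}) :
  'I_k -> {set E} := fun i => Smax P (C1 i :|: C2 i).
Definition Lmeet (P : seq (seq E)) (k : nat) (C1 C2 : 'I_k -> {set E}) :
  'I_k -> {set E} := fun i => Smin P (C1 i :|: C2 i).

Definition mu (k : nat) (e : E) (C : 'I_k -> {set E}) : nat :=
  #|[set i : 'I_k | e \in C i]|.
Definition Be (k : nat) (e : E) (C : 'I_k -> {set E}) : nat := 'C(mu e C, 2).

End Cuts.

From mathcomp Require Import all_boot zify.
Set Implicit Arguments. Unset Strict Implicit. Unset Printing Implicit Defensive.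

(* If e lies on no path of P it belongs to no S_min or S_max set and the
   left-hand side vanishes. Otherwise e lies on a unique path p of P. By
   Menger's theorem (proved below for unit capacities by augmenting paths), a
   minimum cut has size |P| and so meets every path of P in exactly one edge;
   record a minimum cut X by the position of that edge on p. The order on cuts
   makes these positions a_i, b_i of the X_i, Y_i nondecreasing in i, and
   S_max(X_i u Y_i), S_min(X_i u Y_i) sit on p at positions max(a_i, b_i) and
   min(a_i, b_i). With r the position of e, the four multiplicities count the
   i with a_i = r, b_i = r, max(a_i, b_i) = r and min(a_i, b_i) = r. By
   monotonicity these index sets are differences of comparable initial
   segments, and the inequality reduces to the supermodularity of C(n, 2):
   C(c+u+w, 2) + C(c, 2) = C(c+u, 2) + C(c+w, 2) + u w. *)

Lemma bin2_muln2 n : 'C(n, 2) * 2 = n * n.-1.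
Proof.
elim: n => [|n IH] //; rewrite binS bin1 mulnDl IH; case: n {IH} => //= n; nia.
Qed.

Lemma bin2D m n : 'C(m + n, 2) = 'C(m, 2) + m * n + 'C(n, 2).
Proof.
apply/eqP; rewrite -(eqn_pmul2r (isT : 0 < 2)) !mulnDl !bin2_muln2.
rewrite -subn1 -(subn1 m) -(subn1 n); apply/eqP; nia.
Qed.

Lemma bin2_supermodular c u w :
  'C(c + u, 2) + 'C(c + w, 2) <= 'C(c, 2) + 'C(c + u + w, 2).
Proof. rewrite (bin2D (c + u)) (bin2D c w); lia. Qed.

Lemma bin2_card_setD_IU (I : finType) (Ha La Hb Lb : {set I}) :
  La \subset Ha -> Lb \subset Hb ->
  (Ha \subset Hb) || (Hb \subset Ha) -> (La \subset Lb) || (Lb \subset La) ->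
  'C(#|(Ha :&: Hb) :\: (La :&: Lb)|, 2) + 'C(#|(Ha :|: Hb) :\: (La :|: Lb)|, 2)
    <= 'C(#|Ha :\: La|, 2) + 'C(#|Hb :\: Lb|, 2).
Proof.
wlog sHab : Ha La Hb Lb / Ha \subset Hb.
  move=> hwlog sLHa sLHb sH sL; case/orP: (sH) => sHab; first exact: hwlog.
  rewrite setIC [La :&: _]setIC setUC [La :|: _]setUC [X in _ <= X]addnC.
  by apply: hwlog; rewrite // orbC.
move=> sLHa sLHb _.
rewrite (setIidPl sHab) (setUidPr sHab) => /orP [sLab|sLba].
  by rewrite (setIidPl sLab) (setUidPr sLab).
rewrite (setIidPr sLba) (setUidPl sLba) !cardsD.
have sLbHa := subset_trans sLba sLHa; have sLaHb := subset_trans sLHa sHab.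
rewrite (setIidPr sLbHa) (setIidPr sLaHb) (setIidPr sLHa) (setIidPr sLHb).
have := bin2_supermodular (#|Ha| - #|La|) (#|La| - #|Lb|) (#|Hb| - #|Ha|).
move: (subset_leq_card sLba) (subset_leq_card sLHa) (subset_leq_card sHab).
set la := #|La|; set lb := #|Lb|; set ha := #|Ha|; set hb := #|Hb| => h1 h2 h3.
have -> : ha - la + (la - lb) + (hb - ha) = hb - lb by lia.
have -> : ha - la + (la - lb) = ha - lb by lia.
have -> : ha - la + (hb - ha) = hb - la by lia.
by rewrite addnC.
Qed.

Lemma sublevel_sets_total k (a b : 'I_k -> nat) m n :
  {homo a : i j / i <= j} -> {homo b : i j / i <= j} ->
  ([set i | a i < m] \subset [set i | b i < n])
  || ([set i | b i < n] \subset [set i | a i < m]).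
Proof.
move=> monoa monob; case: (boolP (_ \subset _)) => //= /subsetPn [i]; rewrite !inE => ai bi.
apply/subsetP => j; rewrite !inE => bj; case: (leqP j i) => ji.
  exact: leq_ltn_trans (monoa _ _ ji) ai.
by move: bj; rewrite ltnNge (leq_trans _ (monob _ _ (ltnW ji))) // leqNgt.
Qed.

Lemma bin2_card_maxn_minn k (a b : 'I_k -> nat) r :
  {homo a : i j / i <= j} -> {homo b : i j / i <= j} ->
  'C(#|[set i | maxn (a i) (b i) == r]|, 2) + 'C(#|[set i | minn (a i) (b i) == r]|, 2)
    <= 'C(#|[set i | a i == r]|, 2) + 'C(#|[set i | b i == r]|, 2).
Proof.
move=> monoa monob.
have level f : [set i | f i == r] = [set i | f i < r.+1] :\: [set i | f i < r].
  by apply/setP => i; rewrite !inE ltnS -leqNgt -eqn_leq.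
rewrite !level.
have -> : [set i | maxn (a i) (b i) < r.+1] = [set i | a i < r.+1] :&: [set i | b i < r.+1].
  by apply/setP => i; rewrite !inE gtn_max.
have -> : [set i | maxn (a i) (b i) < r] = [set i | a i < r] :&: [set i | b i < r].
  by apply/setP => i; rewrite !inE gtn_max.
have -> : [set i | minn (a i) (b i) < r.+1] = [set i | a i < r.+1] :|: [set i | b i < r.+1].
  by apply/setP => i; rewrite !inE gtn_min.
have -> : [set i | minn (a i) (b i) < r] = [set i | a i < r] :|: [set i | b i < r].
  by apply/setP => i; rewrite !inE gtn_min.
apply: bin2_card_setD_IU; try exact: sublevel_sets_total.
- by apply/subsetP => i; rewrite !inE => /ltnW.
- by apply/subsetP => i; rewrite !inE => /ltnW.
Qed.

Lemma mem_drop_uniq (T : eqType) (s : seq T) i x :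
  uniq s -> (x \in drop i s) = (x \in s) && (i <= index x s).
Proof.
move=> us; case xs: (x \in s) => /=; last first.
  by apply/negbTE; apply: contraFN xs; apply: mem_drop.
rewrite leqNgt -in_take //.
move: us xs; rewrite -{1 2}(cat_take_drop i s) cat_uniq mem_cat => /and3P [_ /hasPn dis _].
case/orP=> [xt|xd]; first by rewrite xt; apply/negP => /dis; rewrite xt.
by rewrite xd; apply/esym/negP => xt; move: (dis x xd); rewrite xt.
Qed.

Lemma index_find_uniq (T : eqType) (a : pred T) s x :
  uniq s -> {in s &, forall y z, a y -> a z -> y = z} -> x \in s ->
  a x = (index x s == find a s).
Proof.
move=> us a1 xs; apply/idP/eqP => [ax|ixs].
  have hs : has a s by apply/hasP; exists x.
  have nth_s : nth x s (find a s) \in s by rewrite mem_nth // -has_find.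
  by rewrite (a1 _ _ xs nth_s ax (nth_find x hs)) index_uniq // -has_find.
have hs : has a s by rewrite has_find -ixs index_mem.
by rewrite -(nth_index x xs) ixs nth_find.
Qed.

Section Flows.
Variables (V E : finType) (src dst : E -> V).

Definition outdeg (F : {set E}) v := #|[set e in F | src e == v]|.
Definition indeg (F : {set E}) v := #|[set e in F | dst e == v]|.

Definition is_flow s t (F : {set E}) n :=
  forall v, v != t -> outdeg F v = indeg F v + (v == s) * n.

(* The net out-degree of F' exceeds that of F by one at x and falls short by
   one at y: F' carries one more unit of flow from x to y. *)
Definition augment (F F' : {set E}) x y :=
  forall v, outdeg F' v + indeg F v + (y == v) = outdeg F v + indeg F' v + (x == v).

Lemma augment_refl (F : {set E}) x : augment F F x x.
Proof. by []. Qed.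

Lemma augment_trans F1 F2 F3 x y z :
  augment F1 F2 x y -> augment F2 F3 y z -> augment F1 F3 x z.
Proof. by move=> h12 h23 v; have := h12 v; have := h23 v; lia. Qed.

Lemma card_sep_setD1 (Q : pred E) (A : {set E}) e : e \in A ->
  #|[set f in A | Q f]| = Q e + #|[set f in A :\ e | Q f]|.
Proof.
move=> eA; rewrite (cardsD1 e) !inE eA /=; congr (_ + _).
by apply: eq_card => f; rewrite !inE andbA.
Qed.

Lemma augment_setU1 (F : {set E}) e : e \notin F -> augment F (e |: F) (src e) (dst e).
Proof.
move=> eF v; rewrite /outdeg /indeg !(card_sep_setD1 _ (setU11 e F)) setU1K //; lia.
Qed.

Lemma augment_setD1 (F : {set E}) e : e \in F -> augment F (F :\ e) (dst e) (src e).
Proof. by move=> eF v; rewrite /outdeg /indeg !(card_sep_setD1 _ eF); lia. Qed.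

Lemma augment_walk (F : {set E}) x y p :
  walk src dst x y p -> uniq p -> {in p, forall e, e \notin F} ->
  augment F (F :|: [set e in p]) x y.
Proof.
elim: p x F => [|e q IH] x F /=.
  move=> /eqP -> _ _; have -> : F :|: [set e in [::]] = F.
    by apply/setP => e; rewrite !inE orbF.
  exact: augment_refl.
case/andP=> /eqP <- wq /andP [eq uq] qF.
apply: augment_trans (augment_setU1 (qF e (mem_head _ _))) _.
have -> : F :|: [set f in e :: q] = (e |: F) :|: [set f in q].
  by apply/setP => f; rewrite !inE; case: (f == e); case: (f \in F).
apply: IH => // f fq; rewrite !inE negb_or qF ?inE ?fq ?orbT // andbT.
by apply: contraNneq eq => <-.
Qed.

Lemma is_flow_augment s t F F' n :
  augment F F' s t -> is_flow s t F n <-> is_flow s t F' n.+1.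
Proof.
move=> hFF'; split=> fl v vt; have := hFF' v; have := fl v vt;
  rewrite [t == v]eq_sym (negbTE vt) [s == v]eq_sym; case: (v == s); lia.
Qed.

Definition edges_of (P : seq (seq E)) : {set E} := [set e | has (fun p => e \in p) P].

Lemma edges_of_cons p P : edges_of (p :: P) = [set e in p] :|: edges_of P.
Proof. by apply/setP => e; rewrite !inE. Qed.

Lemma st_path_uniq s t p : st_path src dst s t p -> uniq p.
Proof. by case/andP=> _ /= /andP [_ /map_uniq]. Qed.

Lemma disjoint_paths_cons s t p P :
  disjoint_paths src dst s t (p :: P) -> {in p, forall e, e \notin edges_of P}.
Proof.
case=> _ /= /andP [dis _] e ep; rewrite inE; apply/hasP => [[q qP eq]].
by move/allP: dis => /(_ q qP) /hasP; apply; exists e.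
Qed.

Lemma is_flow_disjoint_paths s t P :
  disjoint_paths src dst s t P -> is_flow s t (edges_of P) (size P).
Proof.
elim: P => [_ v _|p P IH dP].
  by rewrite muln0 addn0; apply: eq_card => e; rewrite !inE.
have [/= /andP [pst Pst] /andP [_ pw]] := dP.
rewrite edges_of_cons setUC.
have aug : augment (edges_of P) (edges_of P :|: [set e in p]) s t.
  apply: augment_walk; first by case/andP: pst.
    exact: st_path_uniq pst.
  exact: disjoint_paths_cons dP.
exact: (is_flow_augment _ aug).1 (IH (conj Pst pw)).
Qed.

Lemma sum_card_fiber (f : E -> V) (F : {set E}) (R : {set V}) :
  \sum_(v in R) #|[set e in F | f e == v]| = #|[set e in F | f e \in R]|.
Proof.
rewrite -sum1dep_card (partition_big f (mem R)) /=; last by move=> e /andP [].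
apply: eq_bigr => v vR; rewrite -sum1dep_card; apply: eq_bigl => e.
by case: (f e =P v) => [->|]; rewrite ?vR ?andbT ?andbF.
Qed.

Lemma is_flow_cut_balance s t F n (R : {set V}) :
  is_flow s t F n -> s \in R -> t \notin R ->
  #|[set e in F | src e \in R]| = #|[set e in F | dst e \in R]| + n.
Proof.
move=> fl sR tR; rewrite -!sum_card_fiber.
rewrite (eq_bigr (fun v => indeg F v + (v == s) * n)); last first.
  by move=> v vR; apply: fl; apply: contraNneq tR => <-.
rewrite big_split /=; congr (_ + _).
by rewrite (bigD1 s) //= eqxx mul1n big1 ?addn0 // => v /andP [_ /negbTE ->].
Qed.

Definition edge_rel (F : {set E}) : rel V :=
  fun u w => [exists e in F, (src e == u) && (dst e == w)].

Lemma edge_rel_path_walk F x vs : path (edge_rel F) x vs ->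
  exists p, [/\ walk src dst x (last x vs) p, map dst p = vs & {subset p <= F}].
Proof.
elim: vs x => [|w vs IH] x /=; first by exists [::]; rewrite /= eqxx.
case/andP=> /existsP [e /and3P [eF /eqP ex /eqP ew]] /IH [p [wp mp pF]].
exists (e :: p); split=> /=; first by rewrite ex ew eqxx.
- by rewrite ew mp.
- by move=> f; rewrite inE => /orP [/eqP ->|/pF].
Qed.

Lemma is_flow_connect s t F n : is_flow s t F n.+1 -> connect (edge_rel F) s t.
Proof.
move=> fl; pose R := [set v | connect (edge_rel F) s v].
have sR : s \in R by rewrite inE connect0.
suff : t \in R by rewrite inE.
apply: contraT => tR.
have := is_flow_cut_balance fl sR tR.
have /subset_leq_card : [set e in F | src e \in R] \subset [set e in F | dst e \in R].
  apply/subsetP => e; rewrite !inE => /andP [eF se]; rewrite eF.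
  apply: connect_trans se (connect1 _); apply/existsP; exists e; by rewrite eF !eqxx.
lia.
Qed.

Lemma flow_decomposition s t F n : is_flow s t F n ->
  exists Q, [/\ size Q = n, disjoint_paths src dst s t Q & {subset edges_of Q <= F}].
Proof.
elim: n F => [|n IH] F fl; first by exists [::]; split=> // e; rewrite inE.
have /connectP [vs0 pvs0 tl] := is_flow_connect fl.
case: (shortenP pvs0) tl => vs pvs uvs _ tl.
have [p [wp mp pF]] := edge_rel_path_walk pvs; rewrite -tl in wp.
have up : uniq (s :: map dst p) by rewrite mp.
pose F' := F :\: [set e in p].
have fl' : is_flow s t F' n.
  have FF' : F = F' :|: [set e in p].
    apply/setP => e; rewrite !inE; case ep: (e \in p) => /=; last by rewrite orbF.
    exact: pF.
  have aug : augment F' F s t.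
    rewrite [X in augment _ X]FF'; apply: augment_walk => //.
      by case/andP: up => _ /map_uniq.
    by move=> e ep; rewrite !inE ep.
  exact: (is_flow_augment _ aug).2.
have [Q [sQ [Qst Qpw] QF']] := IH F' fl'.
exists (p :: Q); split=> /=; first by rewrite sQ.
- split; first by rewrite /= Qst /st_path wp up.
  rewrite /= Qpw andbT; apply/allP => q qQ; apply/hasP => [[e ep eq]].
  have /QF' : e \in edges_of Q by rewrite inE; apply/hasP; exists q.
  by rewrite !inE ep.
- move=> e; rewrite edges_of_cons inE inE => /orP [/pF //|/QF'].
  by rewrite inE => /andP [].
Qed.

Definition residual (F : {set E}) : rel V := fun u w =>
  [exists e, [&& e \notin F, src e == u & dst e == w]
             || [&& e \in F, dst e == u & src e == w]].

Lemma augment_residual_step F x w : residual F x w ->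
  exists F1, augment F F1 x w /\
    forall u u', u != x -> residual F u u' -> residual F1 u u'.
Proof.
case/existsP=> e /orP [/and3P [eF /eqP ex /eqP ew]|/and3P [eF /eqP ex /eqP ew]].
  exists (e |: F); split; first by rewrite -ex -ew; apply: augment_setU1.
  move=> u u' ux /existsP [f hf]; apply/existsP; exists f.
  have fe : f != e.
    apply: contraNneq ux => fe; move: hf; rewrite fe (negbTE eF) ex /= orbF.
    by case/andP=> /eqP ->.
  by rewrite !inE (negbTE fe).
exists (F :\ e); split; first by rewrite -ex -ew; apply: augment_setD1.
move=> u u' ux /existsP [f hf]; apply/existsP; exists f.
have fe : f != e.
  apply: contraNneq ux => fe; move: hf; rewrite fe eF ex /=.
  by case/andP=> /eqP ->.
by rewrite !inE fe.
Qed.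

Lemma augment_residual_path F x vs : path (residual F) x vs -> uniq (x :: vs) ->
  exists F', augment F F' x (last x vs).
Proof.
elim: vs x F => [|w vs IH] x F /=; first by exists F; apply: augment_refl.
case/andP=> rxw pvs /andP [xvs uvs].
have [F1 [aug1 sub1]] := augment_residual_step rxw.
have pvs1 : path (residual F1) w vs.
  apply: (@sub_in_path _ (predC1 x)) pvs; first by move=> u u' /= ux _; apply: sub1.
  by apply/allP => u uw; apply: contraNneq xvs => <-.
have [F' aug'] := IH w F1 pvs1 uvs.
by exists F'; apply: augment_trans aug1 aug'.
Qed.

Lemma walk_exit_edge (R : {set V}) x y p :
  walk src dst x y p -> x \in R -> y \notin R ->
  has (fun e => (src e \in R) && (dst e \notin R)) p.
Proof.
elim: p x => [|e q IH] x /=; first by move=> /eqP -> ->.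
case/andP=> /eqP -> wq xR yR; rewrite xR /=.
by case dR: (dst e \in R) => //=; apply: IH wq dR yR.
Qed.

Lemma max_disjoint_paths_no_augmenting_path s t P : max_disjoint_paths src dst s t P ->
  ~~ connect (residual (edges_of P)) s t.
Proof.
move=> [dP maxP]; apply/negP => /connectP [vs0 pvs0 tl].
case: (shortenP pvs0) tl => vs pvs uvs _ tl.
have [F' aug] := augment_residual_path pvs uvs; rewrite -tl in aug.
have [Q [sQ dQ _]] :=
  flow_decomposition ((is_flow_augment _ aug).1 (is_flow_disjoint_paths dP)).
by have := maxP Q dQ; rewrite sQ ltnn.
Qed.

Lemma max_disjoint_paths_cut s t P : max_disjoint_paths src dst s t P ->
  exists2 X, is_cut src dst s t X & #|X| <= size P.
Proof.
move=> hP; have fl := is_flow_disjoint_paths hP.1; set F := edges_of P in fl.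
pose R := [set v | connect (residual F) s v].
have sR : s \in R by rewrite inE connect0.
have tR : t \notin R by rewrite inE; apply: max_disjoint_paths_no_augmenting_path.
have fwdR e : src e \in R -> e \notin F -> dst e \in R.
  move=> se eF; rewrite inE in se; rewrite inE; apply: connect_trans se (connect1 _).
  by apply/existsP; exists e; rewrite eF !eqxx.
have bwdR e : e \in F -> dst e \in R -> src e \in R.
  move=> eF de; rewrite inE in de; rewrite inE; apply: connect_trans de (connect1 _).
  by apply/existsP; exists e; rewrite eF !eqxx orbT.
set Out := [set e in F | src e \in R]; set In := [set e in F | dst e \in R].
exists (Out :\: In).
  move=> p /andP [wp _]; have /hasP [e ep /andP [se de]] := walk_exit_edge wp sR tR.
  apply/hasP; exists e => //.
  rewrite inE [e \in In]inE [e \in Out]inE se (negbTE de) andbF andbT /=.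
  by apply: contraR de; apply: fwdR.
have sInOut : In \subset Out.
  apply/subsetP => e; rewrite [e \in In]inE [e \in Out]inE => /andP [eF de].
  by rewrite eF (bwdR e eF de).
have := is_flow_cut_balance fl sR tR; rewrite -/Out -/In cardsD (setIidPr sInOut).
lia.
Qed.

Lemma card_setI_edges_of (C : {set E}) P :
  pairwise (fun p q => ~~ has (fun e => e \in q) p) P ->
  #|C :&: edges_of P| = \sum_(p <- P) #|C :&: [set e in p]|.
Proof.
elim: P => [_|p P IH /= /andP [dis pw]].
  by rewrite big_nil; apply: eq_card0 => e; rewrite !inE andbF.
rewrite big_cons -IH // edges_of_cons setIUr cardsU.
suff -> : C :&: [set e in p] :&: (C :&: edges_of P) = set0 by rewrite cards0 subn0.
apply/setP => e; rewrite !inE; apply/negP => /andP [/andP [_ ep] /andP [_ /hasP [q qP eq]]].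
by move/allP: dis => /(_ q qP) /hasP; apply; exists e.
Qed.

Lemma min_cut_meets_path_at_most_once s t P X p :
  max_disjoint_paths src dst s t P -> min_cut src dst s t X -> p \in P ->
  #|X :&: [set e in p]| <= 1.
Proof.
move=> mP [cutX minX] pP; have [Y cutY YP] := max_disjoint_paths_cut mP.
case: mP => [[Pst pw] _].
have hit q : q \in P -> 0 < #|X :&: [set e in q]|.
  move=> qP; have /hasP [e eq eX] := cutX q (allP Pst q qP).
  by apply/card_gt0P; exists e; rewrite !inE eX.
have : \sum_(q <- P) #|X :&: [set e in q]| <= size P.
  rewrite -card_setI_edges_of //.
  exact: leq_trans (subset_leq_card (subsetIl _ _)) (leq_trans (minX Y cutY) YP).
have : size (rem p P) <= \sum_(q <- rem p P) #|X :&: [set e in q]|.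
  rewrite -sum1_size big_seq [X in _ <= X]big_seq; apply: leq_sum => q /mem_rem.
  exact: hit.
have -> : \sum_(q <- P) #|X :&: [set e in q]| =
  #|X :&: [set e in p]| + \sum_(q <- rem p P) #|X :&: [set e in q]| by rewrite (big_rem p pP).
rewrite (perm_size (perm_to_rem pP)) /=; lia.
Qed.

End Flows.

Section PathSelection.
Variable E : finType.

Lemma pairwise_disjoint_eq (P : seq (seq E)) p q e :
  pairwise (fun p q => ~~ has (fun e => e \in q) p) P ->
  p \in P -> q \in P -> e \in p -> e \in q -> p = q.
Proof.
elim: P => [|r P IH] //= /andP [dis pw].
rewrite !inE => /orP [/eqP ->|pP] /orP [/eqP ->|qP] ep eq //; last exact: IH.
- by move/allP: dis => /(_ q qP) /hasP []; exists e.
- by move/allP: dis => /(_ p pP) /hasP []; exists e.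
Qed.

Lemma mem_Smax_path (P : seq (seq E)) A p e :
  pairwise (fun p q => ~~ has (fun e => e \in q) p) P -> p \in P -> e \in p ->
  (e \in Smax P A) = last_in A p e.
Proof.
move=> pw pP ep; rewrite inE; apply/hasP/idP => [[q qP lq]|]; last by exists p.
by case/and3P: (lq) => eq _ _; rewrite (pairwise_disjoint_eq pw pP qP ep eq).
Qed.

Lemma mem_Smin_path (P : seq (seq E)) A p e :
  pairwise (fun p q => ~~ has (fun e => e \in q) p) P -> p \in P -> e \in p ->
  (e \in Smin P A) = first_in A p e.
Proof.
move=> pw pP ep; rewrite inE; apply/hasP/idP => [[q qP lq]|]; last by exists p.
by case/and3P: (lq) => eq _ _; rewrite (pairwise_disjoint_eq pw pP qP ep eq).
Qed.

Lemma mu_Ljoin_Lmeet_off_paths k (P : seq (seq E)) (C1 C2 : 'I_k -> {set E}) e :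
  ~~ has (fun p => e \in p) P ->
  mu e (Ljoin P C1 C2) = 0 /\ mu e (Lmeet P C1 C2) = 0.
Proof.
move=> eP; split; apply: eq_card0 => i; rewrite !inE; apply: contraNF eP;
  by case/hasP=> q qP /and3P [eq _ _]; apply/hasP; exists q.
Qed.

Variables (X Y : {set E}) (p : seq E) (a b : nat).
Hypotheses (up : uniq p) (ap : a < size p) (bp : b < size p).
Hypotheses (pX : {in p, forall f, (f \in X) = (index f p == a)})
           (pY : {in p, forall f, (f \in Y) = (index f p == b)}).

Lemma last_in_setU e : e \in p -> last_in (X :|: Y) p e = (index e p == maxn a b).
Proof.
move=> ep; rewrite /last_in ep inE pX ?pY //=.
have -> : has (fun f => f \in X :|: Y) (drop (index e p).+1 p)
          = (index e p < a) || (index e p < b).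
  apply/hasP/orP => [[f]|[lt|lt]].
  - rewrite mem_drop_uniq // inE => /andP [fp ef]; rewrite pX ?pY //.
    by case/orP=> /eqP fi; [left|right]; rewrite -fi.
  - exists (nth e p a); last by rewrite inE pX ?mem_nth ?index_uniq ?eqxx.
    by rewrite mem_drop_uniq // mem_nth ?index_uniq.
  - exists (nth e p b); last by rewrite inE pY ?mem_nth ?index_uniq ?eqxx ?orbT.
    by rewrite mem_drop_uniq // mem_nth ?index_uniq.
lia.
Qed.

Lemma first_in_setU e : e \in p -> first_in (X :|: Y) p e = (index e p == minn a b).
Proof.
move=> ep; rewrite /first_in ep inE pX ?pY //=.
have -> : has (fun f => f \in X :|: Y) (take (index e p) p)
          = (a < index e p) || (b < index e p).
  apply/hasP/orP => [[f]|[lt|lt]].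
  - move=> ft; have fp := mem_take ft; move: ft; rewrite in_take // inE pX ?pY //.
    by move=> ef /orP [] /eqP fi; [left|right]; rewrite -fi.
  - exists (nth e p a); last by rewrite inE pX ?mem_nth ?index_uniq ?eqxx.
    by rewrite in_take ?mem_nth ?index_uniq.
  - exists (nth e p b); last by rewrite inE pY ?mem_nth ?index_uniq ?eqxx ?orbT.
    by rewrite in_take ?mem_nth ?index_uniq.
lia.
Qed.

End PathSelection.

Section CutPositions.
Variables (V E : finType) (src dst : E -> V) (s t : V) (P : seq (seq E)) (p : seq E).
Hypotheses (hP : max_disjoint_paths src dst s t P) (pP : p \in P).

Let p_st : st_path src dst s t p := allP hP.1.1 p pP.

Definition cut_pos (X : {set E}) := find (fun f => f \in X) p.

Lemma cut_pos_lt X : min_cut src dst s t X -> cut_pos X < size p.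
Proof. by case=> cutX _; rewrite -has_find; apply: cutX. Qed.

Lemma mem_cut_pos X : min_cut src dst s t X ->
  {in p, forall f, (f \in X) = (index f p == cut_pos X)}.
Proof.
move=> mX f fp; apply: index_find_uniq => //; first exact: st_path_uniq p_st.
move=> g h gp hp gX hX.
have /card_le1_eqP := min_cut_meets_path_at_most_once hP mX pP.
by apply; rewrite !inE ?gp ?hp andbT.
Qed.

Lemma U_lr_cut_pos_mono k (C : 'I_k -> {set E}) : U_lr src dst s t C ->
  {homo (fun i => cut_pos (C i)) : i j / i <= j}.
Proof.
move=> [mC oC] i j; rewrite leq_eqVlt => /orP [/eqP/val_inj -> //|ij].
have [x [y [xC yC xp yp]]] := oC i j ij p p_st.
by move: xC yC; rewrite !mem_cut_pos // => /eqP <- /eqP <-.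
Qed.

Variable e : E.
Hypothesis ep : e \in p.

Lemma mu_cut_pos k (C : 'I_k -> {set E}) : (forall i, min_cut src dst s t (C i)) ->
  mu e C = #|[set i | cut_pos (C i) == index e p]|.
Proof. by move=> mC; apply: eq_card => i; rewrite !inE mem_cut_pos // eq_sym. Qed.

Lemma mu_Ljoin_cut_pos k (C1 C2 : 'I_k -> {set E}) :
  (forall i, min_cut src dst s t (C1 i)) -> (forall i, min_cut src dst s t (C2 i)) ->
  mu e (Ljoin P C1 C2) = #|[set i | maxn (cut_pos (C1 i)) (cut_pos (C2 i)) == index e p]|.
Proof.
move=> m1 m2; apply: eq_card => i; rewrite inE /Ljoin (mem_Smax_path _ hP.1.2 pP ep).
rewrite (last_in_setU (st_path_uniq p_st) (cut_pos_lt (m1 i)) (cut_pos_lt (m2 i))) //.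
  by rewrite inE eq_sym.
all: exact: mem_cut_pos.
Qed.

Lemma mu_Lmeet_cut_pos k (C1 C2 : 'I_k -> {set E}) :
  (forall i, min_cut src dst s t (C1 i)) -> (forall i, min_cut src dst s t (C2 i)) ->
  mu e (Lmeet P C1 C2) = #|[set i | minn (cut_pos (C1 i)) (cut_pos (C2 i)) == index e p]|.
Proof.
move=> m1 m2; apply: eq_card => i; rewrite inE /Lmeet (mem_Smin_path _ hP.1.2 pP ep).
rewrite (first_in_setU (st_path_uniq p_st) (cut_pos_lt (m1 i)) (cut_pos_lt (m2 i))) //.
  by rewrite inE eq_sym.
all: exact: mem_cut_pos.
Qed.

End CutPositions.

Theorem claim1 (V E : finType) (src dst : E -> V) (s t : V) (k : nat)
  (P : seq (seq E)) (C1 C2 : 'I_k -> {set E}) (e : E) :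
  1 <= k ->
  max_disjoint_paths src dst s t P ->
  U_lr src dst s t C1 -> U_lr src dst s t C2 ->
  Be e (Ljoin P C1 C2) + Be e (Lmeet P C1 C2) <= Be e C1 + Be e C2.
Proof.
move=> _ hP C1lr C2lr; rewrite /Be.
have [/hasP [p pP ep]|offP] := boolP (has (fun p => e \in p) P); last first.
  by have [-> ->] := mu_Ljoin_Lmeet_off_paths C1 C2 offP.
have [[m1 _] [m2 _]] := (C1lr, C2lr).
rewrite (mu_cut_pos hP pP ep m1) (mu_cut_pos hP pP ep m2).
rewrite (mu_Ljoin_cut_pos hP pP ep m1 m2) (mu_Lmeet_cut_pos hP pP ep m1 m2).
by apply: bin2_card_maxn_minn; apply: (U_lr_cut_pos_mono hP pP).
Qed.
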